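(* Let $\mathcal W,\mathcal U,\mathcal V$ be finite, $\Phi_W$ a pmf, $\Phi_{U|W}$ a codebook distribution and $\Phi_{V|W,U}$ a channel. Consider the $n$-fold memoryless setting: source $W^n\sim\prod\Phi_W$, random codebook $\{U^n(w^n)\}_{w^n\in\mathcal W^n}$ with independent entries $U^n(w^n)\sim\prod_t\Phi_{U|W}(\cdot|w_t)$, induced output $P_{V^n}(v^n)=\sum_{w^n}\prod_t\Phi_W(w_t)\Phi_{V|W,U}(v_t|w_t,U_t(w^n))$, and $Q_{V^n}=\prod\Phi_V$. If $H_\Phi(W)>I_\Phi(W,U;V)$, then $\mathbf E\|P_{V^n}-Q_{V^n}\|_{TV}\le\frac32\,2^{-\gamma n}$ for all $n$, where $\gamma>0$ is $$\gamma=\max_{\beta,\beta'\ge0,(\beta,\beta')\ne(0,0)}\ \frac{-\beta'}{2\beta+\beta'}\log\mathbf E_\Phi Z^\beta+\frac{-\beta}{2\beta+\beta'}\log\Big(\mathbf E_{\Phi_V}\sqrt{\mathbf E_{\Phi_{W,U|V}}Z^{1-\beta'}}\Big)^2,\qquad Z=\Phi_W(W)\frac{\Phi_{V|W,U}(V|W,U)}{\Phi_V(V)}.$$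
   Context: Expectations $\mathbf E_\Phi$ are under the single-letter joint $\Phi_W\Phi_{U|W}\Phi_{V|W,U}$; the inner expectation in $\mathbf E_{\Phi_V}\sqrt{\mathbf E_{\Phi_{W,U|V}}(\cdot)}$ is over $(W,U)$ given $V$. All logarithms base 2. Expectation on the left is over the random codebook; total variation is half the $\ell_1$ distance. *)

From mathcomp Require Import all_boot.
From Stdlib Require Import Reals.

Set Implicit Arguments.
Unset Strict Implicit.
Unset Printing Implicit Defensive.

Local Open Scope R_scope.

Definition rsum (T : finType) (f : T -> R) : R := \big[Rplus/0]_(i : T) f i.
Definition rprod (T : finType) (f : T -> R) : R := \big[Rmult/1]_(i : T) f i.

Definition log2 (x : R) : R := ln x / ln 2.

Definition is_pmf (T : finType) (p : T -> R) : Prop :=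
  (forall x, 0 <= p x) /\ rsum p = 1.

Section Info.
Variables (W U V : finType).
Variables (PhiW : W -> R) (PhiUW : W -> U -> R) (PhiVWU : W -> U -> V -> R).

Definition joint (w : W) (u : U) (v : V) : R := PhiW w * PhiUW w u * PhiVWU w u v.

Definition PhiV (v : V) : R := rsum (fun w => rsum (fun u => joint w u v)).

(* entropy H_Phi(W) in bits, with 0 log 0 = 0 *)
Definition entropyW : R := - rsum (fun w => PhiW w * log2 (PhiW w)).

(* mutual information I_Phi(W,U;V) in bits (terms of zero mass vanish) *)
Definition mutinfo : R :=
  rsum (fun w => rsum (fun u => rsum (fun v =>
    joint w u v * log2 (PhiVWU w u v / PhiV v)))).

Definition Zrv (w : W) (u : U) (v : V) : R := PhiW w * PhiVWU w u v / PhiV v.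

(* E_Phi Z^b  (Z > 0 wherever the joint mass is positive) *)
Definition EZpow (b : R) : R :=
  rsum (fun w => rsum (fun u => rsum (fun v => joint w u v * Rpower (Zrv w u v) b))).

Definition EVsqrt (b : R) : R :=
  rsum (fun v => PhiV v *
    sqrt (rsum (fun w => rsum (fun u => joint w u v / PhiV v * Rpower (Zrv w u v) b)))).

Definition gamma_exp (b b' : R) : R :=
  (- b' / (2 * b + b')) * log2 (EZpow b)
  + (- b / (2 * b + b')) * log2 ((EVsqrt (1 - b')) ^ 2).

Variable n : nat.

Definition seqW := {ffun 'I_n -> W}.
Definition seqU := {ffun 'I_n -> U}.
Definition seqV := {ffun 'I_n -> V}.

Definition codebook := {ffun seqW -> seqU}.

Definition codebook_prob (c : codebook) : R :=
  rprod (fun wn : seqW => rprod (fun t : 'I_n => PhiUW (wn t) (c wn t))).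

Definition PVn (c : codebook) (vn : seqV) : R :=
  rsum (fun wn : seqW => rprod (fun t : 'I_n =>
    PhiW (wn t) * PhiVWU (wn t) (c wn t) (vn t))).

Definition QVn (vn : seqV) : R := rprod (fun t : 'I_n => PhiV (vn t)).

Definition tv_dist (P Q : seqV -> R) : R := / 2 * rsum (fun vn => Rabs (P vn - Q vn)).

Definition expected_tv : R :=
  rsum (fun c : codebook => codebook_prob c * tv_dist (PVn c) QVn).

End Info.

(* For each output block v^n, split every term of P_{V^n}(v^n) according to
   whether the block likelihood ratio Z^n = prod_t Z(w_t, u_t, v_t) is at most a
   threshold tau or not.  Over the random codebook, the codewords U^n(w^n) are
   independent, so the low part concentrates around its mean with standard
   deviation at most sqrt (tau^b' Q_{V^n}(v^n) E[Z^n^(1-b') | v^n]) (a variance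
   bound for sums of independent terms plus Cauchy--Schwarz), while the high
   part is bounded by Markov's inequality through E Z^n^b / tau^b.  Summing over
   v^n both bounds tensorise into n-th powers of the single-letter quantities,
   and choosing tau to balance them yields (3/2) 2^(-gamma n).  Positivity of
   gamma follows from E ln Z = ln 2 (I(W,U;V) - H(W)) < 0: the moment
   generating function E Z^b of ln Z then drops below 1 for a small b > 0. *)
From Pilot Require Import Defs.
From HB Require Import structures.
From mathcomp Require Import all_boot.
From Stdlib Require Import Reals Lra Classical.

Set Implicit Arguments.
Unset Strict Implicit.
Unset Printing Implicit Defensive.

Local Open Scope R_scope.

Lemma Rplus_associative : associative Rplus.
Proof. by move=> x y z; rewrite Rplus_assoc. Qed.
Lemma Rmult_associative : associative Rmult.
Proof. by move=> x y z; rewrite Rmult_assoc. Qed.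

HB.instance Definition _ :=
  Monoid.isComLaw.Build R 0 Rplus Rplus_associative Rplus_comm Rplus_0_l.
HB.instance Definition _ :=
  Monoid.isComLaw.Build R 1 Rmult Rmult_associative Rmult_comm Rmult_1_l.
HB.instance Definition _ := Monoid.isMulLaw.Build R 0 Rmult Rmult_0_l Rmult_0_r.
HB.instance Definition _ :=
  Monoid.isAddLaw.Build R Rmult Rplus Rmult_plus_distr_r Rmult_plus_distr_l.

Section FiniteSums.
Variable T : finType.
Implicit Types f g : T -> R.

Lemma rsum_ext f g : (forall i, f i = g i) -> rsum f = rsum g.
Proof. by move=> fg; apply: eq_bigr => i _. Qed.

Lemma rprod_ext f g : (forall i, f i = g i) -> rprod f = rprod g.
Proof. by move=> fg; apply: eq_bigr => i _. Qed.

Lemma rsumD f g : rsum (fun i => f i + g i) = rsum f + rsum g.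
Proof. exact: big_split. Qed.

Lemma rprodM f g : rprod (fun i => f i * g i) = rprod f * rprod g.
Proof. exact: big_split. Qed.

Lemma rsum_mull c f : rsum (fun i => c * f i) = c * rsum f.
Proof. by rewrite /rsum big_distrr. Qed.

Lemma rsum_mulr c f : rsum (fun i => f i * c) = rsum f * c.
Proof. by rewrite /rsum big_distrl. Qed.

Lemma rsumB f g : rsum (fun i => f i - g i) = rsum f - rsum g.
Proof.
rewrite (rsum_ext (g := fun i => f i + (-1) * g i)) => [|i]; last ring.
by rewrite rsumD rsum_mull; ring.
Qed.

Lemma rsum_le f g : (forall i, f i <= g i) -> rsum f <= rsum g.
Proof.
move=> fg; apply: (big_ind2 (fun x y => x <= y)) => // [|x1 x2 y1 y2]; lra.
Qed.

Lemma rsum_ge0 f : (forall i, 0 <= f i) -> 0 <= rsum f.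
Proof. by move=> f0; apply: big_ind => // [|x y]; lra. Qed.

Lemma rprod_ge0 f : (forall i, 0 <= f i) -> 0 <= rprod f.
Proof. by move=> f0; apply: big_ind => // [|x y]; [lra | exact: Rmult_le_pos]. Qed.

Lemma rprod_gt0 f : (forall i, 0 < f i) -> 0 < rprod f.
Proof. by move=> f0; apply: big_ind => // [|x y]; [lra | exact: Rmult_lt_0_compat]. Qed.

Lemma rsum_ge_term f i : (forall j, 0 <= f j) -> f i <= rsum f.
Proof.
move=> f0; rewrite /rsum (bigD1 i) //=.
have : 0 <= \big[Rplus/0]_(j | j != i) f j by apply: big_ind => // [|x y]; lra.
lra.
Qed.

Lemma rsum_gt0 f i : (forall j, 0 <= f j) -> 0 < f i -> 0 < rsum f.
Proof. by move=> f0 fi; apply: (Rlt_le_trans _ _ _ fi); apply: rsum_ge_term. Qed.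

Lemma rsum_neq0 f : rsum f <> 0 -> exists i, f i <> 0.
Proof.
move=> sf; apply: NNPP => none; apply: sf.
by rewrite /rsum big1 // => i _; apply: NNPP => fi; apply: none; exists i.
Qed.

Lemma rprod_eq0 f i : f i = 0 -> rprod f = 0.
Proof. by move=> fi; rewrite /rprod (bigD1 i) //= fi Rmult_0_l. Qed.

Lemma sqrt_rprod f : (forall i, 0 <= f i) -> sqrt (rprod f) = rprod (fun i => sqrt (f i)).
Proof.
move=> f0.
suff [] : 0 <= rprod f /\ sqrt (rprod f) = rprod (fun i => sqrt (f i)) by [].
apply: (big_ind2 (fun x y => 0 <= x /\ sqrt x = y)) => [|x1 x2 y1 y2 [? <-] [? <-]|i _].
- by split; [lra | exact: sqrt_1].
- by split; [exact: Rmult_le_pos | exact: sqrt_mult].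
- by split.
Qed.

Lemma Rpower_rprod f b : (forall i, 0 < f i) ->
  rprod (fun i => Rpower (f i) b) = Rpower (rprod f) b.
Proof.
move=> f0.
suff [] : 0 < rprod f /\ rprod (fun i => Rpower (f i) b) = Rpower (rprod f) b by [].
apply: (big_ind2 (fun y x => 0 < x /\ y = Rpower x b)) => [|x1 x2 y1 y2 [? ->] [? ->]|i _].
- by split; [lra | rewrite /Rpower ln_1 Rmult_0_r exp_0].
- by split; [exact: Rmult_lt_0_compat | exact: Rpower_mult_distr].
- by split.
Qed.

End FiniteSums.

Lemma rsum_exch (T1 T2 : finType) (F : T1 -> T2 -> R) :
  rsum (fun i => rsum (fun j => F i j)) = rsum (fun j => rsum (fun i => F i j)).
Proof. exact: exchange_big. Qed.

Lemma rprod_const n c : rprod (fun _ : 'I_n => c) = c ^ n.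
Proof. by rewrite /rprod big_const_ord; elim: n => //= n ->. Qed.

Lemma rsum_rprod (I X : finType) (F : I -> X -> R) :
  rsum (fun f : {ffun I -> X} => rprod (fun i => F i (f i))) =
  rprod (fun i => rsum (F i)).
Proof. by rewrite /rsum /rprod bigA_distr_bigA. Qed.

Lemma rsum2_rprod (I X Y : finType) (G : I -> X -> Y -> R) :
  rsum (fun f : {ffun I -> X} => rsum (fun g : {ffun I -> Y} =>
    rprod (fun i => G i (f i) (g i)))) =
  rprod (fun i => rsum (fun x => rsum (fun y => G i x y))).
Proof.
rewrite -(rsum_rprod (fun i x => rsum (fun y => G i x y))); apply: rsum_ext => f.
exact: (rsum_rprod (fun i y => G i (f i) y)).
Qed.

Lemma rsum_pair (T1 T2 : finType) (F : T1 -> T2 -> R) :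
  rsum (fun p : T1 * T2 => F p.1 p.2) = rsum (fun i => rsum (fun j => F i j)).
Proof. by rewrite /rsum pair_big. Qed.

Lemma rsum_triple (T1 T2 T3 : finType) (F : T1 -> T2 -> T3 -> R) :
  rsum (fun x : T1 * T2 * T3 => F x.1.1 x.1.2 x.2) =
  rsum (fun i => rsum (fun j => rsum (fun k => F i j k))).
Proof.
rewrite (rsum_pair (fun x k => F x.1 x.2 k)).
exact: (rsum_pair (fun i j => rsum (fun k => F i j k))).
Qed.

Lemma ln2_pos : 0 < ln 2.
Proof. by rewrite -ln_1; apply: ln_increasing; lra. Qed.

Lemma abs_dev_split x y m M : 0 <= y -> 0 <= M ->
  Rabs (x + y - (m + M)) <= Rabs (x - m) + y + M.
Proof.
move=> y0 M0; rewrite (_ : x + y - (m + M) = (x - m) + (y - M)); last ring.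
have := Rabs_triang (x - m) (y - M).
have : Rabs (y - M) <= y + M by split_Rabs; lra.
lra.
Qed.

Lemma expect_abs_le_sqrt (C : finType) (p X : C -> R) :
  is_pmf p -> rsum (fun c => p c * Rabs (X c)) <= sqrt (rsum (fun c => p c * (X c * X c))).
Proof.
move=> [p0 p1]; set m := rsum _.
have m0 : 0 <= m by apply: rsum_ge0 => c; apply: Rmult_le_pos => //; apply: Rabs_pos.
have var0 : 0 <= rsum (fun c => p c * ((Rabs (X c) - m) * (Rabs (X c) - m))).
  by apply: rsum_ge0 => c; apply: Rmult_le_pos => //; apply: Rle_0_sqr.
have varE : rsum (fun c => p c * ((Rabs (X c) - m) * (Rabs (X c) - m))) =
    rsum (fun c => p c * (X c * X c)) - m * m.
  rewrite (rsum_ext (g := fun c => p c * (X c * X c) + (-2 * m) * (p c * Rabs (X c))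
                                   + (m * m) * p c)); last first.
    move=> c; rewrite -[X c * X c]Rabs_right; last exact/Rle_ge/Rle_0_sqr.
    rewrite Rabs_mult; ring.
  by rewrite !rsumD !rsum_mull -/m p1; ring.
rewrite -(sqrt_square m) //; apply: sqrt_le_1_alt; lra.
Qed.

Section ProductDistribution.
Variables (I X : finType) (p : I -> X -> R).
Hypothesis p_pmf : forall i, is_pmf (p i).

Definition prod_pmf (c : {ffun I -> X}) : R := rprod (fun i => p i (c i)).

Local Notation E1 i g := (rsum (fun x => p i x * g x)).

Lemma E1_const i k : E1 i (fun=> k) = k.
Proof. by rewrite rsum_mulr (proj2 (p_pmf i)) Rmult_1_l. Qed.

Lemma expect_rprod (g : I -> X -> R) :
  rsum (fun c => prod_pmf c * rprod (fun i => g i (c i))) = rprod (fun i => E1 i (g i)).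
Proof.
rewrite -(rsum_rprod (fun i x => p i x * g i x)).
by apply: rsum_ext => c; rewrite rprodM.
Qed.

Lemma prod_pmf_is_pmf : is_pmf prod_pmf.
Proof.
split=> [c|]; first by apply: rprod_ge0 => i; exact: (proj1 (p_pmf i)).
have := expect_rprod (fun _ _ => 1).
rewrite {2}/rprod big1 => [|i _]; last exact: E1_const.
by move=> <-; apply: rsum_ext => c; rewrite /rprod big1 ?Rmult_1_r.
Qed.

Lemma expect_coord a (g : X -> R) :
  rsum (fun c => prod_pmf c * g (c a)) = E1 a g.
Proof.
have pick (y : I -> R) : rprod (fun i => if i == a then y i else 1) = y a.
  by rewrite /rprod (bigD1 a) //= eqxx big1 ?Rmult_1_r // => i /negbTE ->.
pose k i x := if i == a then g x else 1.
transitivity (rsum (fun c => prod_pmf c * rprod (fun i => k i (c i)))).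
  by apply: rsum_ext => c; rewrite /k (pick (fun i => g (c i))).
rewrite (expect_rprod k) -(pick (fun=> E1 a g)).
by apply: rprod_ext => i; rewrite /k; case: eqP => [->|_]; rewrite ?E1_const.
Qed.

Lemma expect_coord2 a b (g h : X -> R) : a != b ->
  rsum (fun c => prod_pmf c * (g (c a) * h (c b))) = E1 a g * E1 b h.
Proof.
move=> ab; have ba : (b == a) = false by rewrite eq_sym; exact: negbTE.
have pick2 (y z : I -> R) :
    rprod (fun i => if i == a then y i else if i == b then z i else 1) = y a * z b.
  rewrite /rprod (bigD1 a) //= eqxx (bigD1 b) /=; last by rewrite eq_sym.
  by rewrite ba eqxx big1 ?Rmult_1_r // => i /andP [/negbTE -> /negbTE ->].
pose k i x := if i == a then g x else if i == b then h x else 1.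
transitivity (rsum (fun c => prod_pmf c * rprod (fun i => k i (c i)))).
  by apply: rsum_ext => c; rewrite /k (pick2 (fun i => g (c i)) (fun i => h (c i))).
rewrite (expect_rprod k) -(pick2 (fun=> E1 a g) (fun=> E1 b h)).
apply: rprod_ext => i; rewrite /k.
by case: eqP => [->|_]; [|case: eqP => [->|_]]; rewrite ?E1_const.
Qed.

Lemma expect_sum_coords (f : I -> X -> R) :
  rsum (fun c => prod_pmf c * rsum (fun i => f i (c i))) = rsum (fun i => E1 i (f i)).
Proof.
rewrite (rsum_ext (g := fun c => rsum (fun i => prod_pmf c * f i (c i)))); last first.
  by move=> c; rewrite rsum_mull.
by rewrite rsum_exch; apply: rsum_ext => i; rewrite expect_coord.
Qed.

Lemma E1_centred i (f : X -> R) : E1 i (fun x => f x - E1 i f) = 0.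
Proof.
rewrite (rsum_ext (g := fun x => p i x * f x + (- E1 i f) * p i x)); last by move=> x; ring.
by rewrite rsumD rsum_mull (proj2 (p_pmf i)); ring.
Qed.

Lemma E1_centred_sq i (f : X -> R) :
  E1 i (fun x => (f x - E1 i f) * (f x - E1 i f)) <= E1 i (fun x => f x * f x).
Proof.
set m := E1 i f.
rewrite (rsum_ext (g := fun x => p i x * (f x * f x) + (-2 * m) * (p i x * f x)
                                 + (m * m) * p i x)); last by move=> x; ring.
rewrite !rsumD !rsum_mull (proj2 (p_pmf i)) -/m.
have := Rle_0_sqr m; rewrite /Rsqr; lra.
Qed.

(* Variance of a sum of independent coordinates: the cross terms vanish. *)
Lemma variance_sum_coords (f : I -> X -> R) (m := rsum (fun i => E1 i (f i))) :
  rsum (fun c => prod_pmf c * ((rsum (fun i => f i (c i)) - m) *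
                               (rsum (fun i => f i (c i)) - m)))
  <= rsum (fun i => E1 i (fun x => f i x * f i x)).
Proof.
pose d i x := f i x - E1 i (f i).
have dev c : rsum (fun i => f i (c i)) - m = rsum (fun i => d i (c i)).
  by rewrite /m /d rsumB.
have square c : prod_pmf c * (rsum (fun i => d i (c i)) * rsum (fun i => d i (c i))) =
    rsum (fun a => rsum (fun b => prod_pmf c * (d a (c a) * d b (c b)))).
  rewrite -rsum_mulr -rsum_mull; apply: rsum_ext => a.
  by rewrite -!rsum_mull; apply: rsum_ext => b; ring.
rewrite (rsum_ext (g := fun c => rsum (fun a => rsum (fun b =>
    prod_pmf c * (d a (c a) * d b (c b)))))); last by move=> c; rewrite dev square.
rewrite rsum_exch; apply: rsum_le => a; rewrite rsum_exch.
rewrite {1}/rsum (bigD1 a) //= [X in _ + X]big1 ?Rplus_0_r => [|b ba]; last first.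
  by rewrite (expect_coord2 (a := a) (b := b) (d a) (d b)) 1?eq_sym // E1_centred Rmult_0_l.
rewrite -/(rsum _) (expect_coord a (fun x => d a x * d a x)).
exact: E1_centred_sq.
Qed.

Lemma expect_abs_dev_le (f : I -> X -> R) :
  rsum (fun c => prod_pmf c * Rabs (rsum (fun i => f i (c i)) - rsum (fun i => E1 i (f i))))
  <= sqrt (rsum (fun i => E1 i (fun x => f i x * f i x))).
Proof.
apply: Rle_trans (expect_abs_le_sqrt _ prod_pmf_is_pmf) _.
exact/sqrt_le_1_alt/variance_sum_coords.
Qed.

End ProductDistribution.

Lemma pmf_support (T : finType) (q : T -> R) : is_pmf q -> exists t, 0 < q t.
Proof.
move=> [q0 q1]; have [t qt] : exists t, q t <> 0 by apply: rsum_neq0; lra.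
by exists t; have := q0 t; lra.
Qed.

Lemma exp_le_quadratic x : Rabs x <= / 2 -> exp x <= 1 + x + 2 * (x * x).
Proof.
move=> hx; have [xl xr] : - / 2 <= x <= / 2 by split_Rabs; lra.
rewrite -[exp x]Rinv_inv -exp_Ropp.
apply: (Rle_trans _ (/ (1 - x))).
  by apply: Rinv_le_contravar; have := exp_ineq1_le (- x); lra.
apply: (Rmult_le_reg_r (1 - x)); first lra.
rewrite Rinv_l; [nra | lra].
Qed.

Lemma mgf_lt1 (T : finType) (q x : T -> R) :
  is_pmf q -> rsum (fun t => q t * x t) < 0 ->
  exists b, 0 < b /\ rsum (fun t => q t * exp (b * x t)) < 1.
Proof.
move=> [q0 q1] mean_neg; set L := rsum _ in mean_neg.
set K := 1 + rsum (fun t => Rabs (x t)).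
have xK t : Rabs (x t) <= K.
  have := rsum_ge_term t (fun t => Rabs_pos (x t)); rewrite /K; lra.
have K1 : 1 <= K.
  have : 0 <= rsum (fun t => Rabs (x t)) by apply: rsum_ge0 => t; exact: Rabs_pos.
  rewrite /K; lra.
set b := Rmin (/ (2 * K)) (- L / (4 * (K * K))).
have KK : 0 < K * K by nra.
have b_pos : 0 < b.
  by apply: Rmin_glb_lt; [apply: Rinv_0_lt_compat | apply: Rdiv_lt_0_compat]; lra.
have bK : b * K <= / 2.
  have : b * K <= / (2 * K) * K by apply: Rmult_le_compat_r; [lra | exact: Rmin_l].
  by rewrite Rinv_mult Rmult_assoc Rinv_l; lra.
have bKK : b * (K * K) <= - L / 4.
  have : b * (K * K) <= - L / (4 * (K * K)) * (K * K).
    by apply: Rmult_le_compat_r; [lra | exact: Rmin_r].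
  by rewrite /Rdiv Rinv_mult !Rmult_assoc Rinv_l; lra.
exists b; split => //.
have pointwise t :
    q t * exp (b * x t) <= q t + b * (q t * x t) + (2 * (b * b * (K * K))) * q t.
  have bx : Rabs (b * x t) <= / 2.
    rewrite Rabs_mult Rabs_right; last lra.
    by apply: Rle_trans bK; apply: Rmult_le_compat_l; [lra | exact: xK].
  have xx : x t * x t <= K * K.
    rewrite -[x t * x t]Rabs_right; last exact/Rle_ge/Rle_0_sqr.
    by rewrite Rabs_mult; apply: Rmult_le_compat; try exact: Rabs_pos; exact: xK.
  have sq : b * x t * (b * x t) <= b * b * (K * K).
    rewrite (_ : b * x t * (b * x t) = b * b * (x t * x t)); last ring.
    by apply: Rmult_le_compat_l; nra.
  have := Rmult_le_compat_l _ _ _ (q0 t) (Rle_trans _ _ _ (exp_le_quadratic bx)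
    (Rplus_le_compat_l _ _ _ (Rmult_le_compat_l 2 _ _ ltac:(lra) sq))).
  lra.
have := rsum_le pointwise; rewrite !rsumD !rsum_mull q1 -/L; nra.
Qed.

Section SingleLetter.
Variables (W U V : finType).
Variables (PhiW : W -> R) (PhiUW : W -> U -> R) (PhiVWU : W -> U -> V -> R).
Hypothesis HW : is_pmf PhiW.
Hypothesis HUW : forall w, is_pmf (PhiUW w).
Hypothesis HVWU : forall w u, is_pmf (PhiVWU w u).

Local Notation joint := (joint PhiW PhiUW PhiVWU).
Local Notation PhiV := (PhiV PhiW PhiUW PhiVWU).
Local Notation Z := (Zrv PhiW PhiUW PhiVWU).

Lemma joint_ge0 w u v : 0 <= joint w u v.
Proof.
apply: Rmult_le_pos; first apply: Rmult_le_pos.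
- exact: (proj1 HW).
- exact: (proj1 (HUW w)).
- exact: (proj1 (HVWU w u)).
Qed.

Lemma joint_le_PhiV w u v : joint w u v <= PhiV v.
Proof.
apply: (Rle_trans _ (rsum (fun u => joint w u v))).
  by apply: (rsum_ge_term (f := fun u => joint w u v)) => ?; exact: joint_ge0.
apply: (rsum_ge_term (f := fun w => rsum (fun u => joint w u v))) => ?.
by apply: rsum_ge0 => ?; exact: joint_ge0.
Qed.

Lemma PhiV_ge0 v : 0 <= PhiV v.
Proof. by apply: rsum_ge0 => w; apply: rsum_ge0 => u; exact: joint_ge0. Qed.

Lemma joint_mean_source (h : W -> R) :
  rsum (fun w => rsum (fun u => rsum (fun v => joint w u v * h w))) =
  rsum (fun w => PhiW w * h w).
Proof.
apply: rsum_ext => w.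
rewrite (rsum_ext (g := fun u => (PhiW w * h w * PhiUW w u) * rsum (PhiVWU w u))); last first.
  by move=> u; rewrite -rsum_mull; apply: rsum_ext => v; rewrite /joint; ring.
rewrite (rsum_ext (g := fun u => (PhiW w * h w) * PhiUW w u)); last first.
  by move=> u; rewrite (proj2 (HVWU w u)); ring.
by rewrite rsum_mull (proj2 (HUW w)) Rmult_1_r.
Qed.

Lemma joint_is_pmf : is_pmf (fun x : W * U * V => joint x.1.1 x.1.2 x.2).
Proof.
split=> [x|]; first exact: joint_ge0.
have := joint_mean_source (fun=> 1).
rewrite (rsum_ext (f := fun w => PhiW w * 1) (g := PhiW)) ?(proj2 HW) => [total|w]; last ring.
by rewrite (rsum_triple joint) -total; do 3!(apply: rsum_ext => ?); ring.
Qed.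

Lemma joint_pos_factors w u v : 0 < joint w u v ->
  [/\ 0 < PhiW w, 0 < PhiVWU w u v & 0 < PhiV v].
Proof.
move=> j0; split; last exact: Rlt_le_trans j0 (joint_le_PhiV _ _ _).
- case: (Rle_lt_or_eq_dec _ _ (proj1 HW w)) => // e.
  by move: j0; rewrite /Defs.joint -e; lra.
- case: (Rle_lt_or_eq_dec _ _ (proj1 (HVWU w u) v)) => // e.
  by move: j0; rewrite /Defs.joint -e; lra.
Qed.

Lemma mean_ln_Z :
  rsum (fun x : W * U * V => joint x.1.1 x.1.2 x.2 * ln (Z x.1.1 x.1.2 x.2)) =
  ln 2 * (mutinfo PhiW PhiUW PhiVWU - entropyW PhiW).
Proof.
have l2 := ln2_pos.
rewrite (rsum_ext (g := fun x : W * U * V =>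
   ln 2 * (joint x.1.1 x.1.2 x.2 * log2 (PhiVWU x.1.1 x.1.2 x.2 / PhiV x.2)) +
   ln 2 * (joint x.1.1 x.1.2 x.2 * log2 (PhiW x.1.1)))); last first.
  move=> [[w u] v] /=.
  case: (Rle_lt_or_eq_dec _ _ (joint_ge0 w u v)) => [j0|<-]; last ring.
  have [pw pv pV] := joint_pos_factors j0.
  rewrite /Zrv /Rdiv Rmult_assoc ln_mult //; last exact/Rdiv_lt_0_compat.
  by rewrite /log2; field; lra.
rewrite rsumD !rsum_mull.
rewrite (rsum_triple (fun w u v => joint w u v * log2 (PhiVWU w u v / PhiV v))).
rewrite (rsum_triple (fun w u v => joint w u v * log2 (PhiW w))).
by rewrite joint_mean_source /entropyW /mutinfo; ring.
Qed.

Lemma tilted_term_ge0 b w u v : 0 <= joint w u v * Rpower (Z w u v) b.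
Proof. by apply: Rmult_le_pos; [exact: joint_ge0 | exact/Rlt_le/exp_pos]. Qed.

Lemma EZpow_mgf b : EZpow PhiW PhiUW PhiVWU b =
  rsum (fun x : W * U * V => joint x.1.1 x.1.2 x.2 * exp (b * ln (Z x.1.1 x.1.2 x.2))).
Proof. by rewrite (rsum_triple (fun w u v => joint w u v * exp (b * ln (Z w u v)))). Qed.

Lemma EZpow_pos b : 0 < EZpow PhiW PhiUW PhiVWU b.
Proof.
have [x jx] := pmf_support joint_is_pmf.
rewrite EZpow_mgf; apply: (rsum_gt0 (i := x)) => [y|]; first exact: tilted_term_ge0.
exact/Rmult_lt_0_compat/exp_pos.
Qed.

(* The Z^b-tilted mass of an output letter: PhiV v * E[Z^b | V = v]. *)
Definition tilted (b : R) (v : V) : R :=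
  rsum (fun w => rsum (fun u => joint w u v * Rpower (Z w u v) b)).

Lemma tilted_ge0 b v : 0 <= tilted b v.
Proof. by apply: rsum_ge0 => w; apply: rsum_ge0 => u; exact: tilted_term_ge0. Qed.

Lemma EZpow_tilted b : EZpow PhiW PhiUW PhiVWU b = rsum (tilted b).
Proof.
rewrite /EZpow /tilted [RHS]rsum_exch; apply: rsum_ext => w; exact: rsum_exch.
Qed.

Lemma EVsqrt_tilted b : EVsqrt PhiW PhiUW PhiVWU b = rsum (fun v => sqrt (PhiV v * tilted b v)).
Proof.
apply: rsum_ext => v.
case: (Rle_lt_or_eq_dec _ _ (PhiV_ge0 v)) => [pV|<-]; last by rewrite !Rmult_0_l sqrt_0.
have -> : rsum (fun w => rsum (fun u => joint w u v / PhiV v * Rpower (Z w u v) b)) =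
    / PhiV v * tilted b v.
  rewrite /tilted -rsum_mull; apply: rsum_ext => w.
  by rewrite -rsum_mull; apply: rsum_ext => u; rewrite /Rdiv; ring.
rewrite -{1}(sqrt_square (PhiV v)); last lra.
rewrite -sqrt_mult_alt; last by apply: Rmult_le_pos; lra.
by congr sqrt; field; lra.
Qed.

Lemma EVsqrt_pos b : 0 < EVsqrt PhiW PhiUW PhiVWU b.
Proof.
have [[[w u] v] /= jx] := pmf_support joint_is_pmf.
rewrite EVsqrt_tilted; apply: (rsum_gt0 (i := v)) => [y|]; first exact: sqrt_pos.
apply/sqrt_lt_R0/Rmult_lt_0_compat; first exact: Rlt_le_trans jx (joint_le_PhiV _ _ _).
apply: (rsum_gt0 (i := w)) => [w'|]; first by apply: rsum_ge0 => u'; exact: tilted_term_ge0.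
by apply: (rsum_gt0 (i := u)) => [u'|]; [exact: tilted_term_ge0 | exact/Rmult_lt_0_compat/exp_pos].
Qed.

Lemma EVsqrt0 : EVsqrt PhiW PhiUW PhiVWU 0 = 1.
Proof.
rewrite EVsqrt_tilted (rsum_ext (g := PhiV)) => [|v].
  rewrite /Defs.PhiV rsum_exch -(proj2 joint_is_pmf) (rsum_triple joint).
  by apply: rsum_ext => w; rewrite rsum_exch.
have -> : tilted 0 v = PhiV v.
  apply: rsum_ext => w; apply: rsum_ext => u.
  by rewrite /Rpower Rmult_0_l exp_0 Rmult_1_r.
exact/sqrt_square/PhiV_ge0.
Qed.

End SingleLetter.

Section Blocks.
Variables (W U V : finType).
Variables (PhiW : W -> R) (PhiUW : W -> U -> R) (PhiVWU : W -> U -> V -> R).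
Hypothesis HW : is_pmf PhiW.
Hypothesis HUW : forall w, is_pmf (PhiUW w).
Hypothesis HVWU : forall w u, is_pmf (PhiVWU w u).
Variable n : nat.

Local Notation joint := (joint PhiW PhiUW PhiVWU).
Local Notation PhiV := (PhiV PhiW PhiUW PhiVWU).
Local Notation Z := (Zrv PhiW PhiUW PhiVWU).
Local Notation tilted := (tilted PhiW PhiUW PhiVWU).
Local Notation QVn := (QVn PhiW PhiUW PhiVWU (n := n)).
Implicit Types (wn : seqW W n) (un : seqU U n) (vn : seqV V n).

Definition pUn wn un : R := rprod (fun t => PhiUW (wn t) (un t)).
(* Weight of w^n in P_{V^n}(v^n) when its codeword is u^n. *)
Definition chan wn un vn : R := rprod (fun t => PhiW (wn t) * PhiVWU (wn t) (un t) (vn t)).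
Definition jointn wn un vn : R := rprod (fun t => joint (wn t) (un t) (vn t)).
Definition Zn wn un vn : R := rprod (fun t => Z (wn t) (un t) (vn t)).
Definition tiltedn b wn un vn : R :=
  rprod (fun t => joint (wn t) (un t) (vn t) * Rpower (Z (wn t) (un t) (vn t)) b).

Lemma pUn_is_pmf wn : is_pmf (pUn wn).
Proof. exact: (prod_pmf_is_pmf (p := fun t => PhiUW (wn t))). Qed.

Lemma codebook_probE (c : codebook W U n) : codebook_prob PhiUW c = prod_pmf pUn c.
Proof. by []. Qed.

Lemma chan_ge0 wn un vn : 0 <= chan wn un vn.
Proof.
apply: rprod_ge0 => t.
by apply: Rmult_le_pos; [exact: (proj1 HW) | exact: (proj1 (HVWU _ _))].
Qed.

Lemma tiltedn_ge0 b wn un vn : 0 <= tiltedn b wn un vn.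
Proof. by apply: rprod_ge0 => t; exact: tilted_term_ge0. Qed.

Lemma pUn_chan wn un vn : pUn wn un * chan wn un vn = jointn wn un vn.
Proof. by rewrite -rprodM; apply: rprod_ext => t; rewrite /Defs.joint; ring. Qed.

Lemma sum_jointn vn : rsum (fun wn => rsum (fun un => jointn wn un vn)) = QVn vn.
Proof. exact: (rsum2_rprod (fun t w u => joint w u (vn t))). Qed.

Lemma sum_tiltedn b vn :
  rsum (fun wn => rsum (fun un => tiltedn b wn un vn)) = rprod (fun t => tilted b (vn t)).
Proof. exact: (rsum2_rprod (fun t w u => joint w u (vn t) * Rpower (Z w u (vn t)) b)). Qed.

Lemma block_support wn un vn : jointn wn un vn = 0 \/
  [/\ 0 < Zn wn un vn, chan wn un vn = QVn vn * Zn wn un vn &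
      forall b, tiltedn b wn un vn = jointn wn un vn * Rpower (Zn wn un vn) b].
Proof.
case: (classic (exists t, joint (wn t) (un t) (vn t) = 0)) => [[t jt]|supp].
  by left; exact: (rprod_eq0 (f := fun t => joint (wn t) (un t) (vn t)) jt).
have pos t : 0 < joint (wn t) (un t) (vn t).
  case: (Rle_lt_or_eq_dec _ _ (joint_ge0 HW HUW HVWU (wn t) (un t) (vn t))) => // e.
  by case: supp; exists t.
have Z0 t : 0 < Z (wn t) (un t) (vn t).
  have [pw pv pV] := joint_pos_factors HW HUW HVWU (pos t).
  exact/Rdiv_lt_0_compat/pV/Rmult_lt_0_compat.
right; split.
- exact: rprod_gt0.
- rewrite /QVn /Zn -rprodM; apply: rprod_ext => t.
  have [_ _ pV] := joint_pos_factors HW HUW HVWU (pos t).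
  by rewrite /Zrv; field; lra.
- by move=> b; rewrite /tiltedn rprodM (Rpower_rprod b Z0).
Qed.

Definition low tau wn un vn : R :=
  if Rle_dec (Zn wn un vn) tau then chan wn un vn else 0.
Definition high tau wn un vn : R :=
  if Rle_dec (Zn wn un vn) tau then 0 else chan wn un vn.

Lemma chan_split tau wn un vn : chan wn un vn = low tau wn un vn + high tau wn un vn.
Proof. by rewrite /low /high; case: Rle_dec => Ztau /=; ring. Qed.

Lemma high_ge0 tau wn un vn : 0 <= high tau wn un vn.
Proof. by rewrite /high; case: Rle_dec => Ztau /=; [lra | exact: chan_ge0]. Qed.

Lemma high_le_tilted tau b wn un vn : 0 < tau -> 0 <= b ->
  pUn wn un * high tau wn un vn <= Rpower tau (- b) * tiltedn b wn un vn.
Proof.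
move=> tau0 b0.
have rhs0 : 0 <= Rpower tau (- b) * tiltedn b wn un vn.
  by apply: Rmult_le_pos; [exact/Rlt_le/exp_pos | exact: tiltedn_ge0].
rewrite /high; case: Rle_dec => [Ztau|/Rnot_le_lt tauZ] /=; first by rewrite Rmult_0_r.
rewrite pUn_chan; case: (block_support wn un vn) => [-> // | [Z0 _ ->]].
have J0 : 0 <= jointn wn un vn by apply: rprod_ge0 => t; exact: joint_ge0.
have taub0 : 0 < Rpower tau b := exp_pos _.
have ratio : 1 <= / Rpower tau b * Rpower (Zn wn un vn) b.
  have taub : Rpower tau b <= Rpower (Zn wn un vn) b by apply: Rle_Rpower_l; lra.
  apply: (Rmult_le_reg_l (Rpower tau b)) => //; rewrite -Rmult_assoc Rinv_r; lra.
rewrite Rpower_Ropp; nra.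
Qed.

Lemma low_sq_le_tilted tau b wn un vn : 0 < tau -> 0 <= b ->
  pUn wn un * (low tau wn un vn * low tau wn un vn) <=
  Rpower tau b * QVn vn * tiltedn (1 - b) wn un vn.
Proof.
move=> tau0 b0.
have rhs0 : 0 <= Rpower tau b * QVn vn * tiltedn (1 - b) wn un vn.
  apply: Rmult_le_pos; last exact: tiltedn_ge0.
  by apply: Rmult_le_pos; [exact/Rlt_le/exp_pos | apply: rprod_ge0 => t; exact: PhiV_ge0].
rewrite /low; case: Rle_dec => [Ztau|tauZ] /=; last by rewrite Rmult_0_r Rmult_0_r.
rewrite -Rmult_assoc pUn_chan; case: (block_support wn un vn) => [-> | [Z0 chanE ->]].
  by rewrite Rmult_0_l.
have Zsplit : Zn wn un vn = Rpower (Zn wn un vn) (1 - b) * Rpower (Zn wn un vn) b.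
  by rewrite -Rpower_plus (_ : 1 - b + b = 1) ?Rpower_1 //; ring.
have Zb : Rpower (Zn wn un vn) b <= Rpower tau b by apply: Rle_Rpower_l; lra.
have J0 : 0 <= jointn wn un vn.
  by apply: rprod_ge0 => t; exact: joint_ge0.
have Q0 : 0 <= QVn vn by apply: rprod_ge0 => t; exact: PhiV_ge0.
rewrite chanE {1}Zsplit.
have := exp_pos ((1 - b) * ln (Zn wn un vn)); rewrite -/(Rpower _ (1 - b)) => Zb0.
have := Rmult_le_compat_l _ _ _ (Rmult_le_pos _ _ (Rmult_le_pos _ _ J0 Q0) (Rlt_le _ _ Zb0)) Zb.
lra.
Qed.

Lemma expect_deviation_le tau vn :
  rsum (fun c => codebook_prob PhiUW c * Rabs (PVn PhiW PhiVWU c vn - QVn vn)) <=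
  sqrt (rsum (fun wn => rsum (fun un => pUn wn un * (low tau wn un vn * low tau wn un vn)))) +
  2 * rsum (fun wn => rsum (fun un => pUn wn un * high tau wn un vn)).
Proof.
pose code := prod_pmf pUn.
have code_pmf : is_pmf code by apply: prod_pmf_is_pmf; exact: pUn_is_pmf.
set m := rsum (fun wn => rsum (fun un => pUn wn un * low tau wn un vn)).
set M := rsum (fun wn => rsum (fun un => pUn wn un * high tau wn un vn)).
pose P1 (c : codebook W U n) := rsum (fun wn => low tau wn (c wn) vn).
pose P2 (c : codebook W U n) := rsum (fun wn => high tau wn (c wn) vn).
have PE c : PVn PhiW PhiVWU c vn = P1 c + P2 c.
  by rewrite -rsumD; apply: rsum_ext => wn; exact: chan_split.
have QE : QVn vn = m + M.
  rewrite -sum_jointn -rsumD; apply: rsum_ext => wn; rewrite -rsumD.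
  by apply: rsum_ext => un; rewrite -pUn_chan (chan_split tau); ring.
have P2_0 c : 0 <= P2 c by apply: rsum_ge0 => wn; exact: high_ge0.
have M0 : 0 <= M.
  apply: rsum_ge0 => wn; apply: rsum_ge0 => un.
  by apply: Rmult_le_pos; [exact: (proj1 (pUn_is_pmf wn)) | exact: high_ge0].
have EP2 : rsum (fun c => code c * P2 c) = M.
  exact: (expect_sum_coords pUn_is_pmf (fun wn un => high tau wn un vn)).
have dev : rsum (fun c => code c * Rabs (P1 c - m)) <=
    sqrt (rsum (fun wn => rsum (fun un => pUn wn un * (low tau wn un vn * low tau wn un vn)))).
  exact: (expect_abs_dev_le pUn_is_pmf (fun wn un => low tau wn un vn)).
apply: (Rle_trans _ (rsum (fun c => code c * Rabs (P1 c - m) + code c * P2 c + M * code c))).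
  apply: rsum_le => c; rewrite PE QE codebook_probE -/code.
  have := Rmult_le_compat_l _ _ _ (proj1 code_pmf c) (abs_dev_split (P1 c) m (P2_0 c) M0).
  lra.
by rewrite !rsumD EP2 rsum_mull (proj2 code_pmf); lra.
Qed.

Lemma sum_high_le tau b : 0 < tau -> 0 <= b ->
  rsum (fun vn => rsum (fun wn => rsum (fun un => pUn wn un * high tau wn un vn))) <=
  Rpower tau (- b) * EZpow PhiW PhiUW PhiVWU b ^ n.
Proof.
move=> tau0 b0.
apply: (Rle_trans _ (rsum (fun vn => Rpower tau (- b) *
    rsum (fun wn => rsum (fun un => tiltedn b wn un vn))))).
  apply: rsum_le => vn; rewrite -rsum_mull; apply: rsum_le => wn.
  by rewrite -rsum_mull; apply: rsum_le => un; exact: high_le_tilted.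
rewrite rsum_mull (rsum_ext (g := fun vn => rprod (fun t => tilted b (vn t)))).
  by rewrite (rsum_rprod (fun _ v => tilted b v)) rprod_const EZpow_tilted; exact: Rle_refl.
by move=> vn; exact: sum_tiltedn.
Qed.

Lemma sum_sqrt_low_le tau b : 0 < tau -> 0 <= b ->
  rsum (fun vn => sqrt (rsum (fun wn => rsum (fun un =>
    pUn wn un * (low tau wn un vn * low tau wn un vn))))) <=
  sqrt (Rpower tau b) * EVsqrt PhiW PhiUW PhiVWU (1 - b) ^ n.
Proof.
move=> tau0 b0.
apply: (Rle_trans _ (rsum (fun vn => sqrt (Rpower tau b) *
    rprod (fun t => sqrt (PhiV (vn t) * tilted (1 - b) (vn t)))))).
  apply: rsum_le => vn.
  rewrite -sqrt_rprod => [|t]; last by apply: Rmult_le_pos; [exact: PhiV_ge0 | exact: tilted_ge0].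
  rewrite -sqrt_mult_alt; last exact/Rlt_le/exp_pos.
  apply: sqrt_le_1_alt; rewrite rprodM -/(QVn vn) -sum_tiltedn -Rmult_assoc -rsum_mull.
  apply: rsum_le => wn; rewrite -rsum_mull; apply: rsum_le => un.
  exact: low_sq_le_tilted.
rewrite rsum_mull (rsum_rprod (fun _ v => sqrt (PhiV v * tilted (1 - b) v))).
by rewrite rprod_const (EVsqrt_tilted HW HUW HVWU); exact: Rle_refl.
Qed.

Lemma expected_tv_threshold tau b b' : 0 < tau -> 0 <= b -> 0 <= b' ->
  expected_tv PhiW PhiUW PhiVWU n <=
  / 2 * (sqrt (Rpower tau b') * EVsqrt PhiW PhiUW PhiVWU (1 - b') ^ n) +
  Rpower tau (- b) * EZpow PhiW PhiUW PhiVWU b ^ n.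
Proof.
move=> tau0 b0 b'0.
rewrite /expected_tv /tv_dist (rsum_ext (g := fun c => / 2 * rsum (fun vn =>
    codebook_prob PhiUW c * Rabs (PVn PhiW PhiVWU c vn - QVn vn)))); last first.
  by move=> c; rewrite -!rsum_mull; apply: rsum_ext => vn; ring.
rewrite rsum_mull rsum_exch.
apply: Rle_trans (Rmult_le_compat_l _ _ _ _ (rsum_le (fun vn => expect_deviation_le tau vn))) _.
  lra.
rewrite rsumD rsum_mull.
have low_bound := sum_sqrt_low_le tau0 b'0; have high_bound := sum_high_le tau0 b0.
apply: Rle_trans (Rmult_le_compat_l _ _ _ _ (Rplus_le_compat _ _ _ _ low_bound
  (Rmult_le_compat_l 2 _ _ _ high_bound))) _; lra.
Qed.

End Blocks.

(* Balancing the two terms of [expected_tv_threshold]: for the threshold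
   tau = exp (2 n (ln A - ln B) / (2 b + b')) both equal 2^(- rate n), where
   rate is the exponent [gamma_exp] written for E Z^b = A and the square-root
   term B. *)
Lemma balanced_threshold A B b b' n : 0 < A -> 0 < B -> 0 < 2 * b + b' ->
  exists tau, 0 < tau /\
  sqrt (Rpower tau b') * B ^ n = Rpower 2
    (- ((- b' / (2 * b + b')) * log2 A + (- b / (2 * b + b')) * log2 (B ^ 2)) * INR n) /\
  Rpower tau (- b) * A ^ n = Rpower 2
    (- ((- b' / (2 * b + b')) * log2 A + (- b / (2 * b + b')) * log2 (B ^ 2)) * INR n).
Proof.
move=> A0 B0 D; exists (exp (2 * INR n * (ln A - ln B) / (2 * b + b'))).
have l2 := ln2_pos.
rewrite -(@Rpower_pow n A A0) -(@Rpower_pow n B B0) -Rpower_sqrt; last exact: exp_pos.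
rewrite /log2 ln_pow // /Rpower !ln_exp -!exp_plus.
by split; [exact: exp_pos | split; congr exp; rewrite /= ?Rmult_1_r; field; lra].
Qed.

Lemma weights_pos b b' : 0 <= b -> 0 <= b' -> b <> 0 \/ b' <> 0 -> 0 < 2 * b + b'.
Proof.
move=> b0 b'0 [nz|nz].
- by case: (Rle_lt_or_eq_dec _ _ b0) => [|e]; [lra | case: nz].
- by case: (Rle_lt_or_eq_dec _ _ b'0) => [|e]; [lra | case: nz].
Qed.

(* The exponent is positive for b' = 1 and a small b > 0: then the square-root
   term is trivial and E Z^b < 1, since E ln Z = ln 2 (I - H) < 0. *)
Lemma gamma_exp_pos (W U V : finType)
  (PhiW : W -> R) (PhiUW : W -> U -> R) (PhiVWU : W -> U -> V -> R) :
  is_pmf PhiW -> (forall w, is_pmf (PhiUW w)) -> (forall w u, is_pmf (PhiVWU w u)) ->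
  entropyW PhiW > mutinfo PhiW PhiUW PhiVWU ->
  exists b, 0 < b /\ 0 < gamma_exp PhiW PhiUW PhiVWU b 1.
Proof.
move=> HW HUW HVWU HIH.
have l2 := ln2_pos.
have mean_neg := mean_ln_Z HW HUW HVWU.
pose lnZ (x : W * U * V) := ln (Zrv PhiW PhiUW PhiVWU x.1.1 x.1.2 x.2).
have [|b [b0 EZb]] := mgf_lt1 (joint_is_pmf HW HUW HVWU) (x := lnZ).
  by rewrite /lnZ mean_neg; nra.
rewrite -EZpow_mgf in EZb.
exists b; split => //.
have EZ0 := EZpow_pos HW HUW HVWU b.
have lnEZ : ln (EZpow PhiW PhiUW PhiVWU b) < 0 by rewrite -ln_1; apply: ln_increasing.
rewrite /gamma_exp (_ : 1 - 1 = 0) ?(EVsqrt0 HW HUW HVWU) /log2 ?pow1 ?ln_1; last ring.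
have -> : - (1) / (2 * b + 1) * (ln (EZpow PhiW PhiUW PhiVWU b) / ln 2) +
    - b / (2 * b + 1) * (0 / ln 2) =
    - ln (EZpow PhiW PhiUW PhiVWU b) / ((2 * b + 1) * ln 2) by field; lra.
apply: Rdiv_lt_0_compat; nra.
Qed.

Theorem mainTheorem17 (W U V : finType)
  (PhiW : W -> R) (PhiUW : W -> U -> R) (PhiVWU : W -> U -> V -> R) :
  is_pmf PhiW ->
  (forall w, is_pmf (PhiUW w)) ->
  (forall w u, is_pmf (PhiVWU w u)) ->
  entropyW PhiW > mutinfo PhiW PhiUW PhiVWU ->
  (exists b b' : R, 0 <= b /\ 0 <= b' /\ (b <> 0 \/ b' <> 0) /\
     0 < gamma_exp PhiW PhiUW PhiVWU b b') /\
  (forall b b' : R, 0 <= b -> 0 <= b' -> (b <> 0 \/ b' <> 0) ->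
   forall n : nat,
     expected_tv PhiW PhiUW PhiVWU n
       <= 3 / 2 * Rpower 2 (- gamma_exp PhiW PhiUW PhiVWU b b' * INR n)).
Proof.
move=> HW HUW HVWU HIH; split.
  have [b [b0 gamma0]] := gamma_exp_pos HW HUW HVWU HIH.
  by exists b, 1; do !split => //; lra.
move=> b b' b0 b'0 nz n.
have [tau [tau0 [sqrt_term markov_term]]] := balanced_threshold n (EZpow_pos HW HUW HVWU b)
  (EVsqrt_pos HW HUW HVWU (1 - b')) (weights_pos b0 b'0 nz).
have := expected_tv_threshold HW HUW HVWU n tau0 b0 b'0.
rewrite sqrt_term markov_term /gamma_exp; lra.
Qed.
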